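(* For every substitution $\sigma$ and every freshness context $\nabla$: $\sigma$ respects $\nabla$ if and only if $\nabla\sigma\neq\bot$.
   Context: Nominal terms. Atoms $a,b,c,\dots$ and variables $X,Y,\dots$ are sorted; a permutation $\pi$ is a finite sequence of swappings $(a\,b)$ of same-sorted atoms, with inverse $\pi^{-1}$ the reversed sequence; nominal terms are $t::=f(t_1,\dots,t_n)\mid a\mid a.t\mid \pi\cdot X$, and $\pi\bullet t$ denotes the action of permutations on terms ($(a\,b)$ swaps $a$ and $b$ everywhere, including bound positions, and $(a\,b)\bullet(\pi\cdot X)=((a\,b)\pi)\cdot X$; sequences act right to left). A freshness context is a finite set of constraints $a\# X$. A substitution maps variables to terms of the same sort; $t\sigma$ is its application, which allows atom capture (e.g. $(a.X)\{X\mapsto a\}=a.a$) and satisfies $(\pi\cdot X)\sigma=\pi\bullet(X\sigma)$. $\mathrm{FA^{-s}}(t)$ is the set of atoms free in $t$ ignoring suspensions: $\mathrm{FA^{-s}}(f(t_1,\dots,t_n))=\bigcup_i\mathrm{FA^{-s}}(t_i)$, $\mathrm{FA^{-s}}(a)=\{a\}$, $\mathrm{FA^{-s}}(a.t)=\mathrm{FA^{-s}}(t)\setminus\{a\}$, $\mathrm{FA^{-s}}(\pi\cdot X)=\emptyset$. $\sigma$ respects $\nabla$ if for every variable $X$, $\mathrm{FA^{-s}}(X\sigma)\cap\{a\mid a\# X\in\nabla\}=\emptyset$. The algorithm ${\sf FC}$ on a finite set $F$ of formulas $a\# t$: starting from $F;\emptyset$, apply as long as possible: $\{a\# b\}\uplus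 F';\Delta\Rightarrow F';\Delta$ if $a\neq b$; $\{a\# a.t\}\uplus F';\Delta\Rightarrow F';\Delta$; $\{a\# b.t\}\uplus F';\Delta\Rightarrow\{a\# t\}\cup F';\Delta$ if $a\neq b$; $\{a\# f(t_1,\dots,t_n)\}\uplus F';\Delta\Rightarrow \{a\# t_1,\dots,a\# t_n\}\cup F';\Delta$; $\{a\#\pi\cdot X\}\uplus F';\Delta\Rightarrow F';\{\pi^{-1}\bullet a\# X\}\cup\Delta$. The terminal state is $\emptyset;\Delta$ (then ${\sf FC}(F)=\Delta$) or contains some $a\# a$ (then ${\sf FC}(F)=\bot$). For a freshness context $\nabla$ and substitution $\sigma$, $\nabla\sigma:={\sf FC}(\{a\# X\sigma\mid a\# X\in\nabla\})$. *)

From mathcomp Require Import all_boot.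
Set Implicit Arguments.
Unset Strict Implicit.
Unset Printing Implicit Defensive.

Section Nominal.
(* A : atoms, V : variables, F : function symbols *)
Variables (A V : eqType) (F : Type).

(* a permutation is a finite sequence of swappings; it acts right to left *)
Definition perm := seq (A * A).

Definition swap_atom (s : A * A) (c : A) : A :=
  if c == s.1 then s.2 else if c == s.2 then s.1 else c.

Definition perm_atom (p : perm) (c : A) : A := foldr swap_atom c p.

Definition perm_inv (p : perm) : perm := rev p.

Inductive term : Type :=
| Fn of F & seq term
| At of A
| Abs of A & term
| Susp of perm & V.

Fixpoint perm_term (p : perm) (t : term) : term :=
  match t with
  | Fn f ts => Fn f (map (perm_term p) ts)
  | At a => At (perm_atom p a)
  | Abs a u => Abs (perm_atom p a) (perm_term p u)
  | Susp q X => Susp (p ++ q) X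
  end.

(* substitution application, allowing capture *)
Fixpoint subst (sigma : V -> term) (t : term) : term :=
  match t with
  | Fn f ts => Fn f (map (subst sigma) ts)
  | At a => At a
  | Abs a u => Abs a (subst sigma u)
  | Susp q X => perm_term q (sigma X)
  end.

Fixpoint fa_ns (a : A) (t : term) : bool :=
  match t with
  | Fn f ts => has (fa_ns a) ts
  | At b => a == b
  | Abs b u => (a != b) && fa_ns a u
  | Susp _ _ => false
  end.

(* freshness context: finite set of constraints a # X *)
Definition fcontext := seq (A * V).

Definition respects (sigma : V -> term) (nabla : fcontext) : Prop :=
  forall (a : A) (X : V), (a, X) \in nabla -> ~~ fa_ns a (sigma X).

(* result of FC: None = bottom, Some Delta = a freshness context *)
Definition fc_join (r1 r2 : option fcontext) : option fcontext :=
  match r1, r2 with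
  | Some d1, Some d2 => Some (d1 ++ d2)
  | _, _ => None
  end.

(* simplification of a single formula a # t by the rules of FC;
   None iff a terminal formula a # a is produced *)
Fixpoint fc1 (a : A) (t : term) : option fcontext :=
  match t with
  | At b => if a == b then None else Some [::]
  | Abs b u => if a == b then Some [::] else fc1 a u
  | Fn _ ts => foldr fc_join (Some [::]) (map (fc1 a) ts)
  | Susp p X => Some [:: (perm_atom (perm_inv p) a, X)]
  end.

Definition FC (Fs : seq (A * term)) : option fcontext :=
  foldr fc_join (Some [::]) (map (fun f => fc1 f.1 f.2) Fs).

Definition fc_subst (nabla : fcontext) (sigma : V -> term) : option fcontext :=
  FC (map (fun c => (c.1, sigma c.2)) nabla).

End Nominal.

(* FC fails exactly when some formula is reduced to a # a. Suspensions only ever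
   produce constraints, abstractions over a discharge the formula and other
   abstractions are stepped through, so a # t reaches a # a iff a occurs free in t
   outside suspensions. Applied to the formulas a # X sigma, this is the negation
   of "sigma respects nabla". *)
From mathcomp Require Import all_boot.

Section FreshnessCheck.
Variables (A V : eqType) (F : Type).

Lemma foldr_fc_join_eqNone (rs : seq (option (fcontext A V))) :
  (foldr (@fc_join A V) (Some [::]) rs == None) = has (eq_op^~ None) rs.
Proof.
elim: rs => [|[d|] rs IH] //=; rewrite -IH.
by case: (foldr _ _ rs).
Qed.

(* [term] nests [seq term] under [Fn], so the induction is a fixpoint with
   an inner induction on the argument list. *)
Fixpoint fc1_eqNone (a : A) (t : term A V F) {struct t} :
  (fc1 a t == None) = fa_ns a t.
Proof.
case: t => [f ts|b|b u|p X] /=.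
- rewrite foldr_fc_join_eqNone has_map.
  elim: ts => [|t ts IH] //=.
  by rewrite IH /= fc1_eqNone.
- by case: (a == b).
- by case: (a == b) => //=; rewrite fc1_eqNone.
- by [].
Qed.

Lemma FC_eqNone (Fs : seq (A * term A V F)) :
  (FC Fs == None) = has (fun f => fa_ns f.1 f.2) Fs.
Proof.
rewrite /FC foldr_fc_join_eqNone has_map.
by apply: eq_has => f /=; rewrite fc1_eqNone.
Qed.

Lemma fc_subst_eqNone (nabla : fcontext A V) (sigma : V -> term A V F) :
  (fc_subst nabla sigma == None) = has (fun c => fa_ns c.1 (sigma c.2)) nabla.
Proof. by rewrite /fc_subst FC_eqNone has_map. Qed.

Lemma respectsP (sigma : V -> term A V F) (nabla : fcontext A V) :
  reflect (respects sigma nabla) (~~ has (fun c => fa_ns c.1 (sigma c.2)) nabla).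
Proof.
apply: (iffP hasPn) => [fresh a X aX_in | resp [a X] /resp //].
exact: (fresh (a, X)).
Qed.

End FreshnessCheck.

Theorem lemma1 (A V : eqType) (F : Type) (sigma : V -> term A V F)
  (nabla : fcontext A V) :
  respects sigma nabla <-> fc_subst nabla sigma <> None.
Proof.
split=> [/respectsP | fc_ok].
- by rewrite -fc_subst_eqNone => /eqP.
- by apply/respectsP; rewrite -fc_subst_eqNone; apply/eqP.
Qed.
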